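(* Let $\pi_0$ be a portfolio map generated by $\Phi_0$, and let $p_0\in\Delta_n$ be a point at which $\Phi_0$ is differentiable. For every $\epsilon>0$ and every compact neighborhood $K$ of $p_0$ in $\Delta_n$, there exists $\delta>0$ such that whenever $\pi$ is a portfolio map generated by $\Phi$ with $\max_{p\in K}|\Phi(p)-\Phi_0(p)|<\delta$, we have $\sup_{p\in\Delta_n:|p-p_0|<\delta}|\pi(p)-\pi_0(p_0)|<\epsilon$.
   Context: $\Delta_n=\{p\in(0,1)^n:\sum p_i=1\}$, $\overline{\Delta}_n$ its closure, $n\ge2$; $|\cdot|$ is the Euclidean norm. A map $\pi:\Delta_n\to\overline{\Delta}_n$ is generated by a concave function $\Phi:\Delta_n\to(0,\infty)$ if $\sum_i\pi_i(p)\frac{q_i}{p_i}\ge\frac{\Phi(q)}{\Phi(p)}$ for all $p,q\in\Delta_n$. *)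

(* Points of R^n are row vectors 'rV[R]_n (coordinates p 0 i), which carry
   MathComp-Analysis' (product) topology, so [compact] is the library notion. *)
From HB Require Import structures.
From mathcomp Require Import all_boot all_order all_algebra.
From mathcomp Require Import all_classical all_reals all_analysis.
Set Implicit Arguments. Unset Strict Implicit. Unset Printing Implicit Defensive.
Import Order.TTheory GRing.Theory Num.Theory.
Import numFieldTopology.Exports numFieldNormedType.Exports.
Local Open Scope ring_scope.
Local Open Scope classical_set_scope.

Section Defs.
Variables (R : realType) (n : nat).

Definition simplex : set 'rV[R]_n :=
  [set p | (forall i, 0 < p 0 i < 1) /\ \sum_(i < n) p 0 i = 1].

Definition csimplex : set 'rV[R]_n :=
  [set p | (forall i, 0 <= p 0 i <= 1) /\ \sum_(i < n) p 0 i = 1].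

Definition enorm (v : 'rV[R]_n) : R := Num.sqrt (\sum_(i < n) (v 0 i) ^+ 2).

Definition concave_on_simplex (Phi : 'rV[R]_n -> R) : Prop :=
  forall p q t, simplex p -> simplex q -> 0 <= t <= 1 ->
    (1 - t) * Phi p + t * Phi q <= Phi ((1 - t) *: p + t *: q).

Definition generated_by (pi : 'rV[R]_n -> 'rV[R]_n) (Phi : 'rV[R]_n -> R) : Prop :=
  [/\ forall p, simplex p -> 0 < Phi p,
      concave_on_simplex Phi,
      forall p, simplex p -> csimplex (pi p)
    & forall p q, simplex p -> simplex q ->
        Phi q / Phi p <= \sum_(i < n) pi p 0 i * (q 0 i / p 0 i)].

(* Phi (defined on Delta_n) is differentiable at p0 in Delta_n, i.e. (Frechet)
   differentiable along the affine hyperplane containing Delta_n: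
   there is a linear form v |-> sum g_i v_i with
   Phi q = Phi p0 + <g, q - p0> + o(|q - p0|) as q -> p0, q in Delta_n. *)
Definition differentiable_on_simplex_at (Phi : 'rV[R]_n -> R) (p0 : 'rV[R]_n) : Prop :=
  exists g : 'rV[R]_n, forall e : R, 0 < e -> exists d : R, 0 < d /\
    forall q, simplex q -> enorm (q - p0) < d ->
      `|Phi q - Phi p0 - \sum_(i < n) g 0 i * (q 0 i - p0 0 i)| <= e * enorm (q - p0).

Definition compact_nbhs_in_simplex (K : set 'rV[R]_n) (p0 : 'rV[R]_n) : Prop :=
  [/\ K `<=` simplex, compact K
    & exists r : R, 0 < r /\ forall q, simplex q -> enorm (q - p0) < r -> K q].

End Defs.

From HB Require Import structures.
From mathcomp Require Import all_boot all_order all_algebra.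
From mathcomp Require Import all_classical all_reals all_analysis.
From mathcomp Require Import ring lra.
(* The defining inequality Phi(q) <= Phi(p) sum_k pi_k(p) q_k / p_k, tested at
   q = p0 + s (e_i - e_j) with s = +-t, bounds Phi(q) - Phi(p0) from above by
   s Phi(p0) (pi_i(p)/p0_i - pi_j(p)/p0_j) plus an error of order delta when p
   and Phi are delta-close to p0 and Phi0.  Comparing both signs of s with the
   first-order expansion of Phi0 at p0 pins Phi0(p0) (pi_i(p)/p0_i - pi_j(p)/p0_j)
   to g_i - g_j, g the gradient, up to O(delta / t) + o(1) as t -> 0; for
   (pi0, Phi0, p0) itself the error vanishes and equality holds.  Since pi(p) and
   pi0(p0) both have coordinate sum 1, control of all these ratio differences
   controls |pi(p) - pi0(p0)|. *)

Set Implicit Arguments. Unset Strict Implicit. Unset Printing Implicit Defensive.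
Import Order.TTheory GRing.Theory Num.Theory.
Import numFieldTopology.Exports numFieldNormedType.Exports.
Local Open Scope ring_scope.
Local Open Scope classical_set_scope.

Lemma pos_lt_both (R : realFieldType) (a b : R) : 0 < a -> 0 < b ->
  exists x : R, [/\ 0 < x, x < a & x < b].
Proof.
move=> a0 b0; exists (Order.min a b / 2).
have : 0 < Order.min a b by rewrite lt_min a0 b0.
have : Order.min a b <= a by rewrite ge_min lexx.
have : Order.min a b <= b by rewrite ge_min lexx orbT.
split; lra.
Qed.

Section Simplex.
Variables (R : realType) (n : nat).
Implicit Types (a b p q v w : 'rV[R]_n).
Local Notation sqrt_n := (Num.sqrt (n%:R : R)).

Lemma coord_le_enorm v i : `|v 0 i| <= enorm v.
Proof.
rewrite /enorm -(sqrtr_sqr (v 0 i)) ler_sqrt; last first.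
  by apply: sumr_ge0 => k _; rewrite sqr_ge0.
by rewrite (bigD1 i) //= lerDl; apply: sumr_ge0 => k _; rewrite sqr_ge0.
Qed.

Lemma sum_const_ord (x : R) : \sum_(k < n) x = n%:R * x.
Proof. by rewrite sumr_const card_ord mulr_natl. Qed.

Lemma enorm_le_sqrt v M : 0 <= M -> (forall i, `|v 0 i| <= M) ->
  enorm v <= sqrt_n * M.
Proof.
move=> M0 vM; rewrite /enorm -(ger0_norm M0) -sqrtr_sqr -sqrtrM ?ler0n //.
rewrite ler_sqrt ?mulr_ge0 ?ler0n ?sqr_ge0 //.
rewrite -sum_const_ord; apply: ler_sum => i _.
rewrite -real_normK ?num_real //.
by rewrite lerXn2r ?nnegrE ?normr_ge0.
Qed.

Lemma abs_dot_le (g v : 'rV[R]_n) :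
  `|\sum_k g 0 k * v 0 k| <= (\sum_k `|g 0 k|) * enorm v.
Proof.
apply: le_trans (ler_norm_sum _ _ _) _; rewrite mulr_suml.
by apply: ler_sum => k _; rewrite normrM ler_wpM2l ?coord_le_enorm.
Qed.

Definition dv (i j : 'I_n) : 'rV[R]_n := \row_k ((k == i)%:R - (k == j)%:R).

Lemma sum_mul_dv (w : 'I_n -> R) i j : \sum_k w k * dv i j 0 k = w i - w j.
Proof.
have sum_delta l : \sum_k w k * (k == l)%:R = w l.
  rewrite (bigD1 l) //= eqxx mulr1 big1 ?addr0 // => k /negbTE ->.
  by rewrite mulr0.
by under eq_bigr do rewrite mxE mulrBr; rewrite sumrB !sum_delta.
Qed.

Lemma abs_dv_le1 i j k : `|dv i j 0 k| <= 1.
Proof.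
rewrite mxE; case: (k == i); case: (k == j);
  by rewrite /= ?subrr ?subr0 ?sub0r ?normrN ?normr0 ?normr1.
Qed.

Lemma enorm_scale_dv s i j : enorm (s *: dv i j) <= sqrt_n * `|s|.
Proof.
by apply: enorm_le_sqrt => // k; rewrite mxE normrM ler_piMr ?abs_dv_le1.
Qed.

Lemma simplex_csimplex p : simplex p -> csimplex p.
Proof. by case=> hp hs; split=> // i; case/andP: (hp i) => /ltW-> /ltW->. Qed.

Lemma simplex_margin p : simplex p ->
  exists m : R, 0 < m /\ forall k, m <= p 0 k <= 1 - m.
Proof.
case=> hp _; exists (\big[Order.min/1]_k Order.min (p 0 k) (1 - p 0 k)); split.
  apply: lt_bigmin => // k _; case/andP: (hp k) => h1 h2.
  by rewrite lt_min h1 subr_gt0 h2.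
move=> k; have := bigmin_le 1 k (fun k => Order.min (p 0 k) (1 - p 0 k)).
by rewrite le_min lerBrDl -lerBrDr => /andP[-> ->].
Qed.

Lemma simplex_add_dv p m s i j : simplex p ->
  (forall k, m <= p 0 k <= 1 - m) -> `|s| < m -> simplex (p + s *: dv i j).
Proof.
case=> _ hs hm sm; split=> [k|].
  have : `|s * dv i j 0 k| < m by rewrite normrM (le_lt_trans _ sm) ?ler_piMr ?abs_dv_le1.
  rewrite !mxE ltr_norml; case/andP: (hm k); lra.
under eq_bigr do rewrite mxE [X in _ + X]mxE.
by rewrite big_split /= hs sum_mul_dv subrr addr0.
Qed.

Definition ratio_gap w p i j : R := w 0 i / p 0 i - w 0 j / p 0 j.

Lemma ratio_sum_shift w p s i j : simplex p -> \sum_k w 0 k = 1 ->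
  \sum_k w 0 k * ((p + s *: dv i j) 0 k / p 0 k) = 1 + s * ratio_gap w p i j.
Proof.
case=> hp _ w1.
have pk k : p 0 k != 0 by case/andP: (hp k) => /gt_eqF->.
transitivity (\sum_k (w 0 k + s * (w 0 k / p 0 k) * dv i j 0 k)).
  apply: eq_bigr => k _; rewrite !mxE; field; exact: pk.
by rewrite big_split /= w1 sum_mul_dv /ratio_gap mulrBr.
Qed.

Lemma enorm_sub_le_ratio_gap a b p (beta : R) : simplex p -> 0 <= beta ->
  \sum_k a 0 k = \sum_k b 0 k ->
  (forall i j, `|ratio_gap a p i j - ratio_gap b p i j| <= beta) ->
  enorm (a - b) <= sqrt_n * beta.
Proof.
case=> hp hs beta0 ab gap; apply: enorm_le_sqrt => // i.
pose d k := (a 0 k - b 0 k) / p 0 k.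
have pk k : 0 < p 0 k by case/andP: (hp k).
have pdE k : p 0 k * d k = a 0 k - b 0 k by rewrite mulrC divfK ?gt_eqF.
have d_gap j : `|d i - d j| <= beta.
  by have := gap i j; rewrite /ratio_gap /d !mulrBl; congr (`|_| <= _); ring.
have d_mean : d i = \sum_j p 0 j * (d i - d j).
  under eq_bigr do rewrite mulrBr pdE.
  by rewrite sumrB -mulr_suml hs mul1r sumrB ab subrr subr0.
have d_le : `|d i| <= beta.
  rewrite d_mean; apply: le_trans (ler_norm_sum _ _ _) _.
  rewrite -[leRHS]mul1r -hs mulr_suml; apply: ler_sum => j _.
  by rewrite normrM ger0_norm ?ler_wpM2l ?(ltW (pk j)).
rewrite !mxE -pdE normrM ger0_norm ?(ltW (pk i)) //; apply: le_trans d_le.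
by rewrite ler_piMl ?normr_ge0 //; case/andP: (hp i) => _ /ltW.
Qed.

Definition gradient_on_simplex (Phi : 'rV[R]_n -> R) p0 (g : 'rV[R]_n) : Prop :=
  forall e : R, 0 < e -> exists d : R, 0 < d /\
    forall q, simplex q -> enorm (q - p0) < d ->
      `|Phi q - Phi p0 - \sum_(i < n) g 0 i * (q 0 i - p0 0 i)| <= e * enorm (q - p0).

Lemma gradient_upper_bound Phi p0 g : gradient_on_simplex Phi p0 g ->
  exists d M : R, [/\ 0 < d, 0 <= M & forall q, simplex q -> enorm (q - p0) < d ->
    Phi q <= Phi p0 + M * enorm (q - p0)].
Proof.
move=> /(_ 1 ltr01) [d [d0 hd]].
exists d, (\sum_k `|g 0 k| + 1); split=> // [|q hq qd].
  by rewrite addr_ge0 ?sumr_ge0.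
have := hd q hq qd; have := abs_dot_le g (q - p0).
under eq_bigr do rewrite !mxE.
rewrite mul1r => /(le_trans (ler_norm _)) dot.
by rewrite ler_norml => /andP[_]; lra.
Qed.

Lemma gradient_slope_squeeze h p0 g : simplex p0 -> gradient_on_simplex h p0 g ->
  forall e : R, 0 < e -> exists t0 : R, 0 < t0 /\ forall i j (t c eta : R), 0 < t < t0 ->
    (forall s, `|s| = t -> simplex (p0 + s *: dv i j) ->
      h (p0 + s *: dv i j) - h p0 <= s * c + eta) ->
    `|c - (g 0 i - g 0 j)| <= eta / t + e.
Proof.
move=> hp0 hg e e0; have [m [m0 hm]] := simplex_margin hp0.
have N0 : 0 <= sqrt_n := sqrtr_ge0 _.
have N1 : 0 < sqrt_n + 1 by rewrite ltr_wpDl.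
have [d [d0 hd]] := hg (e / (sqrt_n + 1)) (divr_gt0 e0 N1).
have [t0 [t00 t0_m t0_d]] := pos_lt_both m0 (divr_gt0 d0 N1).
exists t0; split=> // i j t c eta /andP[t_pos t_t0] slope.
have t_m : t < m by apply: lt_trans t0_m.
have Nt_lt_d : sqrt_n * t < d.
  by move: t0_d; rewrite ltr_pdivlMr // => /(le_lt_trans _)->//; nra.
set G := g 0 i - g 0 j.
have eN : e / (sqrt_n + 1) * sqrt_n <= e.
  by rewrite mulrAC ler_pdivrMr ?ltr_wpDl // ler_pM2l ?lerDl.
have one_sided s : `|s| = t -> s * (G - c) <= eta + e * t.
  move=> st; set q := p0 + s *: dv i j.
  have hq : simplex q by apply: simplex_add_dv hp0 hm _; rewrite st.
  have qn : enorm (q - p0) <= sqrt_n * t by rewrite addrC addKr -st enorm_scale_dv.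
  have := hd q hq (le_lt_trans qn Nt_lt_d).
  have -> : \sum_k g 0 k * (q 0 k - p0 0 k) = s * G.
    rewrite mulrBr -(sum_mul_dv (fun k => s * g 0 k)); apply: eq_bigr => k _.
    by rewrite !mxE addrC addKr mulrCA mulrA.
  rewrite ler_norml => /andP[+ _].
  have := ler_wpM2l (ltW (divr_gt0 e0 N1)) qn.
  have := slope s st hq; have := ler_wpM2r (ltW t_pos) eN; nra.
have := one_sided t (gtr0_norm t_pos).
have := one_sided (- t); rewrite normrN gtr0_norm // => /(_ erefl) neg pos.
rewrite -(ler_pM2l t_pos) mulrDr mulrCA divff ?gt_eqF // mulr1.
have -> : t * `|c - G| = `|t * (G - c)| by rewrite normrM gtr0_norm // distrC.
by rewrite ler_norml; apply/andP; split; lra.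
Qed.

Lemma generated_ratio_gap_gradient pi Phi p0 g i j : generated_by pi Phi ->
  simplex p0 -> gradient_on_simplex Phi p0 g ->
  Phi p0 * ratio_gap (pi p0) p0 i j = g 0 i - g 0 j.
Proof.
case=> Phi_pos _ pi_cs gen hp0 hg; have P0 := Phi_pos _ hp0.
apply/eqP; rewrite -subr_eq0 -normr_le0; apply/ler_addgt0Pr => e e0.
have [t0 [t00 squeeze]] := gradient_slope_squeeze hp0 hg e0.
rewrite -[X in _ <= X + _](mul0r (t0 / 2)^-1); apply: squeeze => [|s _ hq]; first lra.
have := gen _ _ hp0 hq; rewrite ratio_sum_shift //; last by case: (pi_cs _ hp0).
rewrite ler_pdivrMr //; lra.
Qed.

Lemma ratio_sum_le w p q m : 0 < m -> (forall k, m <= p 0 k) ->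
  csimplex w -> csimplex q -> \sum_k w 0 k * (q 0 k / p 0 k) <= n%:R / m.
Proof.
move=> m0 mp [hw _] [hq _].
rewrite -sum_const_ord; apply: ler_sum => k _.
have [/andP[w0 w1] /andP[q0 q1]] := (hw k, hq k).
have p0 := lt_le_trans m0 (mp k).
rewrite mulrA (@le_trans _ _ (1 / p 0 k)) //.
  by rewrite ler_wpM2r ?mulr_ile1 // invr_ge0 ltW.
by rewrite div1r lef_pV2 ?posrE.
Qed.

Lemma ratio_sum_perturb_le w p p0 q m del : 0 < m ->
  (forall k, m <= p 0 k /\ m <= p0 0 k) -> (forall k, `|p 0 k - p0 0 k| <= del) ->
  csimplex w -> csimplex q ->
  \sum_k w 0 k * (q 0 k / p 0 k) <= \sum_k w 0 k * (q 0 k / p0 0 k) + n%:R * del / (m * m).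
Proof.
move=> m0 mp close [hw _] [hq _].
rewrite -mulrA -sum_const_ord -big_split; apply: ler_sum => k _ /=.
have [/andP[w0 w1] /andP[q0 q1]] := (hw k, hq k).
have [mpk mp0k] := mp k; have [pk p0k] := (lt_le_trans m0 mpk, lt_le_trans m0 mp0k).
have gap : w 0 k * q 0 k * (p0 0 k - p 0 k) <= del.
  have x0 : 0 <= w 0 k * q 0 k by rewrite mulr_ge0.
  have x1 : w 0 k * q 0 k <= 1 by rewrite mulr_ile1.
  have := close k; rewrite ler_norml; nra.
have -> : w 0 k * (q 0 k / p 0 k) = w 0 k * (q 0 k / p0 0 k)
    + w 0 k * q 0 k * (p0 0 k - p 0 k) / (p 0 k * p0 0 k).
  by field; rewrite !gt_eqF.
rewrite lerD2l ler_pdivrMr ?mulr_gt0 //; apply: le_trans gap _.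
have del0 : 0 <= del := le_trans (normr_ge0 _) (close k).
by rewrite mulrAC ler_pdivlMr ?mulr_gt0 // ler_wpM2l // ler_pM // ltW.
Qed.

Lemma generated_shift_le pi Phi p p0 q (m del L P0 Y : R) :
  generated_by pi Phi -> simplex p -> simplex q -> 0 < m ->
  (forall k, m <= p 0 k /\ m <= p0 0 k) -> (forall k, `|p 0 k - p0 0 k| <= del) ->
  0 <= del -> 0 <= L -> 0 <= P0 -> Phi p <= P0 + L * del -> Y <= Phi q + del ->
  Y <= P0 * \sum_k pi p 0 k * (q 0 k / p0 0 k)
       + (P0 * (n%:R / (m * m)) + n%:R / m * L + 1) * del.
Proof.
case=> Phi_pos _ pi_cs gen hp hq m0 mp close del0 L0 P00 Phi_p Y_q.
have [w_cs q_cs] := (pi_cs p hp, simplex_csimplex hq).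
set S := \sum_k pi p 0 k * (q 0 k / p 0 k).
have Phi_q : Phi q <= S * Phi p by rewrite -ler_pdivrMr ?gen ?Phi_pos.
have S0 : 0 <= S.
  apply: sumr_ge0 => k _; case: w_cs => /(_ k)/andP[w0 _] _.
  case: q_cs => /(_ k)/andP[q0 _] _; have := mp k; case=> mpk _.
  by rewrite mulr_ge0 ?divr_ge0 // (le_trans (ltW m0)).
have S_le : S <= n%:R / m.
  by apply: ratio_sum_le m0 _ w_cs q_cs => k; case: (mp k).
have S_near := ratio_sum_perturb_le m0 mp close w_cs q_cs.
have := ler_wpM2l S0 Phi_p; have := ler_wpM2r P00 S_near.
have := ler_wpM2r (mulr_ge0 L0 del0) S_le; rewrite -/S; nra.
Qed.

Lemma generated_ratio_gap_stable Phi0 p0 g (e r : R) : simplex p0 ->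
  gradient_on_simplex Phi0 p0 g -> 0 <= Phi0 p0 -> 0 < e -> 0 < r ->
  exists rho C : R, [/\ 0 < rho, rho < r, 0 <= C &
    forall pi Phi p i j (del : R), generated_by pi Phi -> 0 <= del <= rho ->
      (forall q, simplex q -> enorm (q - p0) <= rho -> `|Phi q - Phi0 q| <= del) ->
      simplex p -> enorm (p - p0) <= del ->
      `|Phi0 p0 * ratio_gap (pi p) p0 i j - (g 0 i - g 0 j)| <= C * del + e].
Proof.
move=> hp0 hg P0 e0 r0.
have [t0 [t00 squeeze]] := gradient_slope_squeeze hp0 hg e0.
have [m [m0 hm]] := simplex_margin hp0.
have [d1 [M [d10 M0 hM]]] := gradient_upper_bound hg.
have N0 : 0 <= sqrt_n := sqrtr_ge0 _.
have m2 : 0 < m / 2 := divr_gt0 m0 (ltr0n _ 2).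
have [x [x0 x_d1 x_m]] := pos_lt_both d10 m2.
have [rho [rho0 rho_r rho_x]] := pos_lt_both r0 x0.
have [rho_d1 rho_m] : rho < d1 /\ rho < m / 2 by split; apply: lt_trans rho_x _.
have N1 : 0 < sqrt_n + 1 by rewrite ltr_wpDl.
have [t [t_pos t_t0 t_rho]] := pos_lt_both t00 (divr_gt0 rho0 N1).
have Nt_rho : sqrt_n * t <= rho.
  by move: t_rho; rewrite ltr_pdivlMr // => /(le_lt_trans _)/ltW->//; nra.
pose kappa := Phi0 p0 * (n%:R / (m / 2 * (m / 2))) + n%:R / (m / 2) * (M + 1) + 1.
have kappa0 : 0 <= kappa.
  by rewrite /kappa !addr_ge0 ?mulr_ge0 ?divr_ge0 ?invr_ge0 ?mulr_ge0 ?addr_ge0 ?ler0n ?(ltW m0).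
exists rho, (kappa / t); split=> // [|pi Phi p i j del gen /andP[del0 del_rho] close hp hpd].
  exact: divr_ge0 kappa0 (ltW t_pos).
have p_near k : `|p 0 k - p0 0 k| <= del.
  by have := coord_le_enorm (p - p0) k; rewrite !mxE => /le_trans->.
have margin k : m / 2 <= p 0 k /\ m / 2 <= p0 0 k.
  have := p_near k; rewrite ler_norml; case/andP: (hm k); lra.
have Phi_p : Phi p <= Phi0 p0 + (M + 1) * del.
  have := close p hp (le_trans hpd del_rho); rewrite ler_norml => /andP[_].
  have := hM p hp (le_lt_trans hpd (le_lt_trans del_rho rho_d1)).
  have := ler_wpM2l M0 hpd; lra.
rewrite mulrAC; apply: squeeze => [|s st hq]; first by rewrite t_pos.
have q_near : enorm (p0 + s *: dv i j - p0) <= rho.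
  by rewrite addrC addKr (le_trans (enorm_scale_dv _ _ _)) // st.
have Phi_q : Phi0 (p0 + s *: dv i j) <= Phi (p0 + s *: dv i j) + del.
  by have := close _ hq q_near; rewrite ler_norml => /andP[+ _]; lra.
have M1 : 0 <= M + 1 by rewrite addr_ge0.
have := generated_shift_le gen hp hq m2 margin p_near del0 M1 P0 Phi_p Phi_q.
rewrite ratio_sum_shift -/kappa //; last by case: gen => _ _ /(_ p hp)[].
lra.
Qed.

End Simplex.

Theorem lemma4p7 (R : realType) (n : nat) (hn : (2 <= n)%N)
  (pi0 : 'rV[R]_n -> 'rV[R]_n) (Phi0 : 'rV[R]_n -> R)
  (hgen0 : generated_by pi0 Phi0)
  (p0 : 'rV[R]_n) (hp0 : simplex p0)
  (hdiff : differentiable_on_simplex_at Phi0 p0)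
  (eps : R) (heps : 0 < eps)
  (K : set 'rV[R]_n) (hK : compact_nbhs_in_simplex K p0) :
  exists delta : R, 0 < delta /\
    forall (pi : 'rV[R]_n -> 'rV[R]_n) (Phi : 'rV[R]_n -> R),
      generated_by pi Phi ->
      (forall p, K p -> `|Phi p - Phi0 p| < delta) ->
      (* sup_{p in Delta_n, |p - p0| < delta} |pi p - pi0 p0| < eps *)
      exists c : R, c < eps /\
        forall p, simplex p -> enorm (p - p0) < delta ->
          enorm (pi p - pi0 p0) <= c.
Proof.
have [[Phi0_pos _ pi0_cs _] [g hg]] := (hgen0, hdiff).
have [_ _ [r [r0 hr]]] := hK.
have P0 : 0 < Phi0 p0 := Phi0_pos _ hp0.
have N0 : 0 < Num.sqrt (n%:R : R) by rewrite sqrtr_gt0 ltr0n (leq_trans _ hn).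
pose e := eps * Phi0 p0 / (4 * Num.sqrt n%:R).
have e0 : 0 < e by rewrite divr_gt0 ?mulr_gt0.
have [rho [C [rho0 rho_r C0 stable]]] := generated_ratio_gap_stable hp0 hg (ltW P0) e0 r0.
have C1 : 0 < C + 1 by rewrite ltr_wpDl.
have [del [del0 del_rho del_e]] := pos_lt_both rho0 (divr_gt0 e0 C1).
have del_C : C * del <= e by move: del_e; rewrite ltr_pdivlMr //; nra.
exists del; split=> // pi Phi gen close.
exists (eps / 2); split=> [|p hp hpd]; first lra.
have closeK q : simplex q -> enorm (q - p0) <= rho -> `|Phi q - Phi0 q| <= del.
  by move=> hq qr; apply/ltW/close/hr/(le_lt_trans qr rho_r).
have [[_ pi_sum] [_ pi0_sum]] : csimplex (pi p) /\ csimplex (pi0 p0).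
  by case: gen => _ _ pi_cs _; split; [apply: pi_cs | apply: pi0_cs].
have beta0 : 0 <= 2 * e / Phi0 p0 := divr_ge0 (mulr_ge0 (ler0n _ 2) (ltW e0)) (ltW P0).
apply: le_trans (enorm_sub_le_ratio_gap hp0 beta0 (etrans pi_sum (esym pi0_sum)) _) _.
  move=> i j; rewrite ler_pdivlMr // mulrC -[X in X * _]gtr0_norm // -normrM mulrBr.
  rewrite (generated_ratio_gap_gradient i j hgen0 hp0 hg).
  have := stable pi Phi p i j del gen _ closeK hp (ltW hpd).
  by rewrite (ltW del0) (ltW del_rho) => /(_ isT) /le_trans->//; lra.
suff -> : Num.sqrt n%:R * (2 * e / Phi0 p0) = eps / 2 by [].
by rewrite /e; field; rewrite !gt_eqF.
Qed.
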